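(* Let $\mathcal{P}_1,\dots,\mathcal{P}_k$ be finite posets with $p_j=|\mathcal{P}_j|$ and $r\ge1$. The set $\mathcal{N}_{\le r}$ is closed. Equivalently, for any $\mathbf{T}\in\mathbb{R}^{p_1\times\cdots\times p_k}$ the infimum $\inf_{\boldsymbol\theta\in\mathcal{N}_{\le r}}\Vert\mathbf{T}-\boldsymbol\theta\Vert_F$ is attained by some $\boldsymbol\theta\in\mathcal{N}_{\le r}$.
   Context: For a finite poset $\mathcal{Q}$, the order cone $\mathcal{C}(\mathcal{Q})$ is the set of $\mathbf{f}\in\mathbb{R}^{\mathcal{Q}}$ with $f_x\ge0$ for all $x$ and $f_x\le f_y$ whenever $x\preceq y$. $\mathcal{N}_{\le r}$ is the set of tensors in $\mathbb{R}^{\mathcal{P}_1\times\cdots\times\mathcal{P}_k}\cong\mathbb{R}^{p_1\times\cdots\times p_k}$ of the form $\sum_{i=1}^r\otimes_{j=1}^k\mathbf{v}^{(ij)}$ with $\mathbf{v}^{(ij)}\in\mathcal{C}(\mathcal{P}_j)$. $\Vert\cdot\Vert_F$ is the Frobenius norm, $\Vert\mathbf{T}\Vert_F^2=\sum_{i_1,\dots,i_k}T_{i_1\dots i_k}^2$. *)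

From HB Require Import structures.
From mathcomp Require Import all_boot all_order all_algebra.
From mathcomp Require Import all_classical all_reals all_analysis.
Set Implicit Arguments. Unset Strict Implicit. Unset Printing Implicit Defensive.
Import Order.TTheory GRing.Theory Num.Theory.
Local Open Scope ring_scope.

Definition tindex (k : nat) (d : 'I_k -> Order.disp_t)
  (P : forall j : 'I_k, finPOrderType (d j)) : finType :=
  {dffun forall j : 'I_k, P j}.

Definition order_cone (R : realType) (d : Order.disp_t) (Q : finPOrderType d)
  (f : Q -> R) : Prop :=
  (forall x, 0 <= f x) /\ (forall x y : Q, (x <= y)%O -> f x <= f y).

Definition Nle (R : realType) (k : nat) (d : 'I_k -> Order.disp_t)
  (P : forall j : 'I_k, finPOrderType (d j)) (r : nat) : set (tindex P -> R) :=
  [set theta | exists v : 'I_r -> forall j : 'I_k, P j -> R,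
      (forall i j, order_cone (v i j)) /\
      theta = fun x : tindex P => \sum_(i < r) \prod_(j < k) v i j (x j)].

Arguments Nle {R k d} P r _.
Arguments tindex {k d} P.

Definition frob (R : realType) (I : finType) (T : I -> R) : R :=
  Num.sqrt (\sum_(x : I) T x ^+ 2).

From HB Require Import structures.
From mathcomp Require Import all_boot all_order all_algebra.
From mathcomp Require Import all_classical all_reals all_analysis.
Set Implicit Arguments. Unset Strict Implicit. Unset Printing Implicit Defensive.
Import Order.TTheory GRing.Theory Num.Theory.
Import numFieldNormedType.Exports.
Local Open Scope ring_scope.
Local Open Scope classical_set_scope.

(* A rank-one term with factors in order cones can be rebalanced, without
   changing the tensor, so that every factor is bounded by max(1, c), where c
   is the product of the maxima of the factors; c is in turn bounded by any
   bound on the entries of a sum of such terms, all terms being nonnegative.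
   Hence the tensors of N_{<=r} with bounded entries are images of a compact
   set of factors.  Any theta in N_{<=r} closer to T than a fixed theta0 has
   entries bounded by |T|_F + |T - theta0|_F, so the distance to T attains its
   minimum on N_{<=r}; and a set in which every point has a nearest point is
   closed. *)

Section real_topology.
Variable R : realType.

Lemma closed_le_continuous (T : topologicalType) (f g : T -> R) :
  continuous f -> continuous g -> closed [set t | f t <= g t].
Proof.
move=> cf cg.
have -> : [set t | f t <= g t] = (g - f) @^-1` [set z | 0 <= z].
  by apply/seteqP; split => t /=; rewrite subr_ge0.
apply: preimage_closed; last exact: closed_ge.
by move=> t _; apply: continuousB; [apply: cg | apply: cf].
Qed.

Lemma min_attained_compact_sublevel (X : topologicalType) (Y : Type)
    (F : X -> Y) (h : Y -> R) (A : set Y) (K : set X) (w0 : X) :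
  compact K -> continuous (h \o F) -> F @` K `<=` A -> K w0 ->
  (forall y, A y -> h y < h (F w0) -> (F @` K) y) ->
  exists2 y, A y & forall y', A y' -> h y <= h y'.
Proof.
move=> cK chF KA Kw0 sublevel.
have [w /set_mem Kw wmin] := compact_EVT_min (ex_intro _ w0 Kw0) cK
  (continuous_subspaceT chF).
exists (F w); first by apply: KA; exists w.
move=> y Ay; have [hy_lt|] := ltP (h y) (h (F w0)).
  by have [w' Kw' <-] := sublevel y Ay hy_lt; apply: wmin; rewrite inE.
by apply: le_trans; apply: wmin; rewrite inE.
Qed.

Lemma closed_proximinal (T : topologicalType) (A : set T) (dist : T -> T -> R) :
  (forall t, continuous (dist t)) -> (forall t, dist t t = 0) ->
  (forall t a, dist t a <= 0 -> a = t) ->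
  (forall t, exists2 a, A a & forall a', A a' -> dist t a <= dist t a') ->
  closed A.
Proof.
move=> cdist dist0 dist_le0 nearest t At.
have [a Aa amin] := nearest t.
suff /dist_le0 <- : dist t a <= 0 by [].
rewrite leNgt; apply/negP => da_gt0.
have : nbhs t (dist t @^-1` ball (dist t t) (dist t a)).
  exact: cdist t _ (nbhsx_ballx _ _ da_gt0).
case/At => a' [Aa' /=]; rewrite dist0 /ball /= sub0r normrN.
by rewrite ltNge (le_trans (amin a' Aa') (ler_norm _)).
Qed.

End real_topology.

Section frobenius.
Variables (R : realType) (I : finType).
Implicit Type a : I -> R.

Lemma normr_le_frob a x : `|a x| <= frob a.
Proof.
rewrite /frob -sqrtr_sqr ler_sqrt; last by apply: sumr_ge0 => *; apply: sqr_ge0.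
by rewrite (bigD1 x) //= lerDl; apply: sumr_ge0 => *; apply: sqr_ge0.
Qed.

Lemma frob0 : frob (0 : I -> R) = 0.
Proof. by rewrite /frob big1 ?sqrtr0 // => x _; rewrite /= expr0n. Qed.

Lemma frob_le0 a : frob a <= 0 -> a = 0.
Proof.
have sq_ge0 x : 0 <= a x ^+ 2 by apply: sqr_ge0.
move=> frob_le0; have /eqP : frob a = 0 by apply/le_anti; rewrite frob_le0 sqrtr_ge0.
rewrite sqrtr_eq0 => sum_le0.
have sum0 : \sum_x a x ^+ 2 = 0.
  by apply/eqP; rewrite eq_le sum_le0 sumr_ge0.
apply/funext => x; apply/eqP; rewrite -sqrf_eq0.
by rewrite (psumr_eq0P (fun x _ => sq_ge0 x) sum0).
Qed.

Lemma frob_continuous (Y : topologicalType) (G : Y -> I -> R) :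
  (forall x, continuous (G^~ x)) -> continuous (fun y => frob (G y)).
Proof.
move=> cG y; apply: continuous_comp; last exact: sqrt_continuous.
apply: (@continuous_big R _ +%R 0 xpredT); first exact: add_continuous.
move=> x _ z; rewrite (_ : (fun y => _) = G^~ x \* G^~ x); last first.
  by apply/funext => ?; rewrite /= expr2.
by apply: continuousM; apply: cG.
Qed.

End frobenius.

Section rank_one_rebalancing.
Variables (R : realType) (k : nat) (d : 'I_k -> Order.disp_t)
  (P : forall j : 'I_k, finPOrderType (d j)).

Definition peak {j : 'I_k} (f : P j -> R) : R := \big[Num.max/0]_(y : P j) f y.

Lemma peak_attained {j} {f : P j -> R} : (forall y, 0 <= f y) -> peak f != 0 ->
  {y | peak f = f y}.
Proof.
rewrite /peak => f_ge0; case: (pickP (fun _ : P j => true)) => [y0 _ _ | none].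
  have [y _ ->] := @eq_bigmax _ _ (P j) 0 y0 xpredT f isT (fun y _ => f_ge0 y).
  by exists y.
by rewrite big_pred0 ?eqxx.
Qed.

Lemma prod_peak_le (u : forall j, P j -> R) (M : R) :
  (forall j y, 0 <= u j y) -> 0 <= M ->
  (forall x : tindex P, \prod_j u j (x j) <= M) -> \prod_j peak (u j) <= M.
Proof.
move=> u_ge0 M_ge0 uM.
have [->//|/prodf_neq0 peak_neq0] := eqVneq (\prod_j peak (u j)) 0.
have [y peak_y] : exists y : tindex P, forall j, peak (u j) = u j (y j).
  exists [ffun j => sval (peak_attained (u_ge0 j) (peak_neq0 j isT))] => j.
  by rewrite ffunE; case: (peak_attained _ _).
by rewrite (eq_bigr _ (fun j _ => peak_y j)).
Qed.

Lemma prod_le_prod_peak (u : forall j, P j -> R) (x : tindex P) :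
  (forall j y, 0 <= u j y) -> \prod_j u j (x j) <= \prod_j peak (u j).
Proof. by move=> u_ge0; apply: ler_prod => j _; rewrite u_ge0 le_bigmax. Qed.

Lemma rank_one_rebalance (u : forall j, P j -> R) (B : R) :
  (forall j, order_cone (u j)) -> 1 <= B -> \prod_j peak (u j) <= B ->
  exists u' : forall j, P j -> R,
    [/\ forall j, order_cone (u' j), forall j y, u' j y <= B &
        forall x : tindex P, \prod_j u' j (x j) = \prod_j u j (x j)].
Proof.
move=> u_cone B_ge1 cB; have u_ge0 j y : 0 <= u j y by case: (u_cone j).
have [k0|k_gt0] := posnP k.
  by exists u; split => // j; have := ltn_ord j; rewrite {2}k0.
pose j0 : 'I_k := Ordinal k_gt0; pose c := \prod_j peak (u j).
(* Factor j is normalised to maximum 1 (a zero factor stays zero, as 0^-1 = 0)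
   and the factor j0 carries the whole mass c. *)
pose s j := (peak (u j))^-1 * (if j == j0 then c else 1).
have c_ge0 : 0 <= c by apply: prodr_ge0 => j _; apply: bigmax_ge_id.
have s_ge0 j : 0 <= s j.
  by rewrite mulr_ge0 ?invr_ge0 ?bigmax_ge_id //; case: ifP.
have prod_s : \prod_j s j = c^-1 * c.
  rewrite big_split /= prodfV [X in _ * X](bigD1 j0) //=.
  by rewrite [X in c * X]big1 ?mulr1 // => j /negbTE ->.
exists (fun j y => u j y * s j); split.
- move=> j; split => [y | y y' le_yy']; first exact: mulr_ge0.
  by apply: ler_wpM2r => //; case: (u_cone j) => _; apply.
- move=> j y; rewrite mulrA.
  have u_div_peak : u j y * (peak (u j))^-1 <= 1.
    have [->|peak_neq0] := eqVneq (peak (u j)) 0; first by rewrite invr0 mulr0.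
    have peak_gt0 : 0 < peak (u j) by rewrite lt_def peak_neq0 bigmax_ge_id.
    by rewrite ler_pdivrMr // mul1r le_bigmax.
  apply: le_trans (ler_piMl _ u_div_peak) _; first by case: ifP.
  by case: ifP.
- move=> x; rewrite big_split /= prod_s.
  have [c0|c_neq0] := eqVneq c 0; last by rewrite mulVf ?mulr1.
  have ux0 : \prod_j u j (x j) = 0.
    by apply/le_anti; rewrite prodr_ge0 // andbT -c0 prod_le_prod_peak.
  by rewrite ux0 mul0r.
Qed.

End rank_one_rebalancing.

Section factor_space.
Variables (R : realType) (k : nat) (d : 'I_k -> Order.disp_t)
  (P : forall j : 'I_k, finPOrderType (d j)) (r : nat).

Definition cp (v : 'I_r -> forall j : 'I_k, P j -> R) : tindex P -> R :=
  fun x => \sum_(i < r) \prod_(j < k) v i j (x j).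

(* All factors in one non-dependent function, so that the product topology and
   Tychonoff's theorem apply to them. *)
Definition factor_space := {ptws 'I_r * {j : 'I_k & P j} -> R}.

Definition factors (w : factor_space) (i : 'I_r) (j : 'I_k) (y : P j) : R :=
  w (i, Tagged (fun j => P j) y).
Arguments factors w i j y : clear implicits.

Definition pack_factors (v : 'I_r -> forall j : 'I_k, P j -> R) : factor_space :=
  fun s => v s.1 (tag s.2) (tagged s.2).

Definition box (B : R) : set factor_space :=
  [set w | forall s, `[0, B] (w s)].

Definition monotone_factors : set factor_space :=
  [set w | forall i j (y y' : P j), (y <= y')%O -> factors w i j y <= factors w i j y'].

Definition cone_factors (B : R) := box B `&` monotone_factors.

Lemma box_compact B : compact (box B).
Proof. exact: tychonoff (fun _ => @segment_compact R 0 B). Qed.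

Lemma monotone_factors_closed : closed monotone_factors.
Proof.
have -> : monotone_factors = \bigcap_(i in setT) \bigcap_(j in setT)
    \bigcap_(y in setT) \bigcap_(y' in [set y' | (y <= y')%O])
    [set w | factors w i j y <= factors w i j y'].
  by apply/seteqP; split => [w mw i _ j _ y _ y'|w mw i j y y' le_yy'];
    [apply: mw | apply: mw].
do 3 (apply: closed_bigI => ? _); apply: closed_bigI => y' _.
by apply: closed_le_continuous; apply: proj_continuous.
Qed.

Lemma cone_factors_compact B : compact (cone_factors B).
Proof.
by apply: compact_closedI; [apply: box_compact | apply: monotone_factors_closed].
Qed.

Lemma cone_factors0 B : 0 <= B -> cone_factors B 0.
Proof. by move=> B_ge0; split=> [s|i j y y' _] /=; rewrite ?in_itv /= ?lexx. Qed.

Lemma cp_continuous (x : tindex P) : continuous (fun w => cp (factors w) x).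
Proof.
apply: (@continuous_big R _ +%R 0 xpredT); first exact: add_continuous.
move=> i _; apply: (@continuous_big R _ *%R 1 xpredT); first exact: mul_continuous.
by move=> j _; apply: proj_continuous.
Qed.

Lemma Nle_cp_cone_factors B w : cone_factors B w -> Nle P r (cp (factors w)).
Proof.
case=> w_box w_mono; exists (factors w); split => // i j.
split => [y|]; last exact: w_mono.
by move: (w_box (i, Tagged (fun j => P j) y)); rewrite /= in_itv /= => /andP[].
Qed.

Lemma Nle_bounded_cp_cone_factors (theta : tindex P -> R) (M : R) :
  Nle P r theta -> 0 <= M -> (forall x, theta x <= M) ->
  exists2 w, cone_factors (M + 1) w & theta = cp (factors w).
Proof.
move=> [v [v_cone ->]] M_ge0 thetaM.
have v_ge0 i j y : 0 <= v i j y by case: (v_cone i j).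
have term_le_sum i (x : tindex P) : \prod_j v i j (x j) <= cp v x.
  rewrite /cp (bigD1 i) //= lerDl.
  by apply: sumr_ge0 => i' _; apply: prodr_ge0.
have /choice[v' v'P] i : exists u', [/\ forall j, order_cone (u' j),
    forall j y, u' j y <= M + 1 &
    forall x : tindex P, \prod_j u' j (x j) = \prod_j v i j (x j)].
  apply: rank_one_rebalance; first exact: v_cone.
    by rewrite lerDr.
  apply: le_trans (prod_peak_le (v_ge0 i) M_ge0 _) _; last by rewrite lerDl.
  by move=> x; apply: le_trans (term_le_sum i x) (thetaM x).
exists (pack_factors v'); last first.
  by apply/funext => x; apply: eq_bigr => i _; case: (v'P i) => _ _ ->.
split => [[i [j y]]|i j y y' le_yy'] /=.
  by case: (v'P i) => /(_ j)[v'_ge0 _] v'_le _; rewrite in_itv /= v'_ge0 v'_le.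
by case: (v'P i) => /(_ j)[_ v'_mono] _ _; apply: v'_mono.
Qed.

Lemma Nle_nearest (T : tindex P -> R) :
  exists2 theta, Nle P r theta &
    forall theta', Nle P r theta' -> frob (T - theta) <= frob (T - theta').
Proof.
pose M := frob T + frob (T - cp (factors 0)).
have M_ge0 : 0 <= M by rewrite addr_ge0 ?sqrtr_ge0.
apply: (@min_attained_compact_sublevel R factor_space _ (cp \o factors)
  (fun theta => frob (T - theta)) _ (cone_factors (M + 1)) 0).
- exact: cone_factors_compact.
- apply: frob_continuous => x w.
  by apply: continuousB; [apply: cst_continuous | apply: cp_continuous].
- by move=> _ [w Kw <-]; apply: Nle_cp_cone_factors Kw.
- by apply: cone_factors0; rewrite addr_ge0.
move=> theta Ntheta closer.
have thetaM x : theta x <= M.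
  have -> : theta x = T x - (T - theta) x by rewrite /= opprB addrC subrK.
  apply: le_trans (ler_norm _) _; apply: le_trans (ler_normB _ _) _.
  apply: lerD; first exact: normr_le_frob.
  exact: le_trans (normr_le_frob (T - theta) x) (ltW closer).
have [w Kw ->] := Nle_bounded_cp_cone_factors Ntheta M_ge0 thetaM.
by exists w.
Qed.

End factor_space.

Theorem theorem13 (R : realType) (k : nat) (d : 'I_k -> Order.disp_t)
  (P : forall j : 'I_k, finPOrderType (d j)) (r : nat) (hr : (1 <= r)%N) :
  closed (Nle P r : set {ptws tindex P -> R}) /\
  (forall T : tindex P -> R,
     exists2 theta, Nle P r theta &
       forall theta', Nle P r theta' -> frob (T - theta) <= frob (T - theta')).
Proof.
split; last exact: Nle_nearest.
apply: (@closed_proximinal R {ptws tindex P -> R} _ (fun T theta => frob (T - theta))).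
- move=> T; apply: frob_continuous => x theta.
  by apply: continuousB; [apply: cst_continuous | apply: proj_continuous].
- by move=> T; rewrite subrr frob0.
- by move=> T theta /frob_le0/eqP; rewrite subr_eq0 => /eqP.
- exact: Nle_nearest.
Qed.
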